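(* Fix $\kappa\ge20$, $\delta>0$ and constants $\mathcal{C},\beta,R>0$. For the function $d_*(T,\delta)$ defined in the context, let $$T_2(\delta)=\inf\Big\{T\ \Big|\ d_*(t,\delta)\le\frac{\kappa\,d_*(t/\kappa^2,\delta)}{8}\ \text{ for all } t\ge T\Big\}.$$ Then $T_2(\delta)<\infty$.
   Context: $M=(C,A,B)$ with $C\in\mathbb{R}^{p\times n}$, $A\in\mathbb{R}^{n\times n}$, $B\in\mathbb{R}^{n\times m}$, $\rho(A)<1$. $\mathcal{H}_{0,a,b}$ is the block Hankel matrix with $(i,j)$ block $CA^{i+j-2}B$ ($a=b=\infty$ allowed), and finite Hankel matrices are compared with $\mathcal{H}_{0,\infty,\infty}$ after zero padding to doubly infinite matrices (operator norm on $\ell^2$). For $T>0$, $$d_*(T,\delta)=\inf\Big\{d\in\mathbb{Z}_{\ge1}\ \Big|\ \mathcal{C}\beta R\sqrt d\sqrt{\frac{pd+\log(T/\delta)}{T}}\ge\|\mathcal{H}_{0,d,d}-\mathcal{H}_{0,\infty,\infty}\|_2\Big\}.$$ *)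

From HB Require Import structures.
From mathcomp Require Import all_boot all_order all_algebra.
From mathcomp Require Import all_classical all_reals all_analysis.
From mathcomp Require Import complex.
Set Implicit Arguments. Unset Strict Implicit. Unset Printing Implicit Defensive.
Import Order.TTheory GRing.Theory Num.Theory.
Local Open Scope ring_scope.
Local Open Scope classical_set_scope.

Section Hankel.
Variable R : realType.

Definition spectral_radius_lt1 (n : nat) (A : 'M[R]_n) : Prop :=
  forall z : complex.complex (R : realFieldType),
    @eigenvalue (complex.complex (R : realFieldType)) n
      (map_mx (fun x : R => complex.Complex x 0) A) z -> `|z| < 1.

Variables (p n m : nat) (C : 'M[R]_(p, n)) (A : 'M[R]_n) (B : 'M[R]_(n, m)).

(* (k,l) scalar entry of the block (i,j) (0-indexed blocks) of H_{0,oo,oo}: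
   block (i+1, j+1) in the paper's 1-indexing is C A^{i+j} B. *)
Definition hankel_inf (i j : nat) (k : 'I_p) (l : 'I_m) : R :=
  (C *m A ^+ (i + j) *m B) k l.

(* H_{0,d,d}, zero-padded to a doubly infinite matrix, minus H_{0,oo,oo} *)
Definition hankel_diff (d : nat) (i j : nat) (k : 'I_p) (l : 'I_m) : R :=
  (if (i < d)%N && (j < d)%N then hankel_inf i j k l else 0) - hankel_inf i j k l.

Definition trunc_val (d N : nat) (x : 'I_N * 'I_m -> R) : R :=
  Num.sqrt (\sum_(r : 'I_N * 'I_p)
     (\sum_(c : 'I_N * 'I_m) hankel_diff d r.1 c.1 r.2 c.2 * x c) ^+ 2).

(* ell^2 operator norm ||H_{0,d,d} - H_{0,oo,oo}||_2 (possibly +oo), computed as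
   the supremum over finitely supported unit vectors and finite row truncations *)
Definition hankel_diff_norm (d : nat) : \bar R :=
  ereal_sup [set (trunc_val d (projT2 x))%:E | x in
     [set x : {N : nat & 'I_N * 'I_m -> R} |
        \sum_(c : 'I_(projT1 x) * 'I_m) (projT2 x c) ^+ 2 <= 1]].

(* d_*(T, delta), as an extended real (inf of the empty set = +oo) *)
Definition dstar_set (cC beta Rc T delta : R) : set nat :=
  [set d : nat | (1 <= d)%N /\
     (hankel_diff_norm d <=
     (cC * beta * Rc * Num.sqrt (d%:R) *
        Num.sqrt ((p%:R * d%:R + ln (T / delta)) / T))%:E)%E].

Definition dstar (cC beta Rc T delta : R) : \bar R :=
  ereal_inf [set (d%:R)%:E | d in dstar_set cC beta Rc T delta].

End Hankel.

From HB Require Import structures.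
From mathcomp Require Import all_boot all_order all_algebra.
From mathcomp Require Import all_classical all_reals all_analysis.
From mathcomp Require Import complex.
From mathcomp Require Import ring lra zify.
Import Order.TTheory GRing.Theory Num.Theory.
Local Open Scope ring_scope.
Local Open Scope complex_scope.
Local Open Scope classical_set_scope.

(** Since rho(A) < 1, Cayley-Hamilton makes every entry h_k of C A^k B satisfy
    a linear recurrence whose characteristic roots lie in the open unit disc,
    so h_(D+k) is bounded by c r^k times the window |h_D| + ... + |h_(D+L-1)|.
    Each entry of H_{0,2D,2D} - H_{0,oo,oo} is some h_(D+k) with k >= D, and
    the window is bounded by the tail norm at D, so the tail norm at 2D is at
    most K rho^D times the tail norm at D. The threshold defining d_* at
    (D, T/kappa^2) is at most kappa times the threshold at (2D, T). Hence, once
    K kappa rho^D <= 1, admissibility of D at time T/kappa^2 implies that of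
    2D at time T; for large T every smaller admissible D has zero tail norm.
    Thus d_*(T) <= 2 d_*(T/kappa^2) <= kappa d_*(T/kappa^2) / 8. *)

Section LinearRecurrence.
Context {F : numFieldType}.
Implicit Types (l r : F) (s : seq F) (u : nat -> F).

Definition diff_shift l u k := u k.+1 - l * u k.

(* [diff_shifts s u] is [\prod_(l <- s) (sigma - l)] applied to [u], with
   [sigma] the shift; it vanishes iff [u] satisfies the linear recurrence
   with characteristic roots [s]. *)
Definition diff_shifts s u : nat -> F := foldl (fun v l => diff_shift l v) u s.

Lemma sum_norm_diff_shift_le l u L :
  \sum_(i < L) `|diff_shift l u i| <= (1 + `|l|) * \sum_(i < L.+1) `|u i|.
Proof.
apply: le_trans (_ : \sum_(i < L) (`|u i.+1| + `|l| * `|u i|) <= _).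
  by apply: ler_sum => i _; rewrite -normrM ler_normB.
rewrite big_split /= -mulr_sumr mulrDl mul1r lerD //.
  by rewrite big_ord_recl lerDr.
by rewrite ler_wpM2l // big_ord_recr lerDl.
Qed.

Lemma geometric_bound_of_diff_shift l r (a b : F) u : `|l| < r -> `|u 0%N| <= b ->
  a <= b * (r - `|l|) -> (forall k, `|diff_shift l u k| <= a * r ^+ k) ->
  forall k, `|u k| <= b * r ^+ k.
Proof.
move=> lr u0 ab diff_le; elim=> [|k IHk]; first by rewrite expr0 mulr1.
have rk : 0 <= r ^+ k by rewrite exprn_ge0 // ltW // (le_lt_trans _ lr).
have -> : u k.+1 = diff_shift l u k + l * u k by rewrite /diff_shift subrK.
apply: le_trans (ler_normD _ _) _; rewrite normrM.
apply: le_trans (lerD (diff_le k) (ler_wpM2l (normr_ge0 l) IHk)) _.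
have -> : b * r ^+ k.+1 = b * (r - `|l|) * r ^+ k + `|l| * (b * r ^+ k).
  by rewrite exprS; ring.
by rewrite lerD2r ler_wpM2r.
Qed.

Lemma diff_shifts_eq0_decay r s : all (fun l => `|l| < r) s ->
  exists2 c, 0 <= c & forall u, diff_shifts s u =1 (fun=> 0) ->
    forall k, `|u k| <= c * r ^+ k * \sum_(l < size s) `|u l|.
Proof.
elim: s => [_ | l s IH] /=.
  by exists 0 => // u u_eq0 k; rewrite u_eq0 normr0 !mul0r.
case/andP=> lr /IH [c c0 decay_s].
have rl : 0 < r - `|l| by rewrite subr_gt0.
pose c' := 1 + c * (1 + `|l|) / (r - `|l|).
have c'1 : 1 <= c' by rewrite lerDl divr_ge0 ?(ltW rl) // mulr_ge0 // addr_ge0.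
exists c'; first exact: le_trans c'1.
move=> u u_eq0 k; set W := \sum_(i < _) _.
have W0 : 0 <= W by rewrite sumr_ge0.
rewrite -mulrA [_ * W]mulrC mulrA.
move: k; apply: (@geometric_bound_of_diff_shift l r (c * (1 + `|l|) * W)) => //.
- apply: le_trans (_ : W <= _); last by rewrite ler_peMl.
  by rewrite /W big_ord_recl lerDl sumr_ge0.
- by rewrite [c' * W * _]mulrAC; apply: ler_wpM2r => //; rewrite -ler_pdivrMr // lerDr.
- move=> j; apply: le_trans (decay_s _ u_eq0 j) _.
  rewrite [X in _ <= X](_ : _ = c * r ^+ j * ((1 + `|l|) * W)); last by ring.
  apply: ler_wpM2l; last exact: sum_norm_diff_shift_le.
  by rewrite mulr_ge0 // exprn_ge0 // ltW // (le_lt_trans _ lr).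
Qed.

End LinearRecurrence.

Lemma diff_shifts_mx (F : numFieldType) q p m (M : 'M[F]_q) (X : 'M[F]_(p, q))
    (Y : 'M[F]_(q, m)) (i : 'I_p) (j : 'I_m) (s : seq F) :
  diff_shifts s (fun k => (X *m M ^+ k *m Y) i j) =
    (fun k => (X *m M ^+ k *m ((\prod_(x <- rev s) (M - x%:M)) *m Y)) i j).
Proof.
elim: s Y => [|l s IH] Y /=; first by rewrite big_nil mul1mx.
have -> : diff_shift l (fun k => (X *m M ^+ k *m Y) i j) =
          (fun k => (X *m M ^+ k *m ((M - l%:M) *m Y)) i j).
  apply/funext => k.
  have -> : X *m M ^+ k *m ((M - l%:M) *m Y) =
            X *m M ^+ k.+1 *m Y - l *: (X *m M ^+ k *m Y).
    by rewrite mulmxBl mul_scalar_mx mulmxBr -scalemxAr exprSr !mulmxA.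
  by rewrite /diff_shift !mxE.
by rewrite IH rev_cons big_rcons mulmxA.
Qed.

Lemma complex_roots_rate {R : rcfType} (s : seq R[i]) : all (fun z => `|z| < 1) s ->
  exists2 r : R, 0 < r < 1 & all (fun z => `|z| < r%:C) s.
Proof.
elim: s => [_ | z s IH] /=; first by exists (1 / 2) => //; lra.
case/andP=> z1 /IH [r /andP[r0 r1] Hr].
have [a a0 za] : exists2 a : R, 0 <= a & `|z| = a%:C.
  by rewrite normc_def; exists (Num.sqrt (complex.Re z ^+ 2 + complex.Im z ^+ 2)).
move: z1; rewrite za ltcR => a1.
exists (Num.max r ((1 + a) / 2)); first by rewrite lt_max r0 gt_max r1 /=; lra.
have a_lt : a < (1 + a) / 2 by lra.
rewrite ltcR lt_max a_lt orbT /=.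
apply/allP => w /(allP Hr) wr; apply: lt_le_trans wr _.
by rewrite lecR le_max lexx.
Qed.

Lemma normc_real {R : rcfType} (x : R) : `|x%:C| = `|x|%:C.
Proof. by rewrite normc_def /= expr0n /= addr0 sqrtr_sqr. Qed.

Lemma hankel_window_decay {R : realType} {p n m} (C : 'M[R]_(p, n)) (A : 'M[R]_n)
    (B : 'M[R]_(n, m)) :
  spectral_radius_lt1 A -> exists r c L, [/\ 0 < r < 1, 0 <= c &
    forall d k a b, `|(C *m A ^+ (d + k) *m B) a b| <=
      c * r ^+ k * \sum_(l < L) `|(C *m A ^+ (d + l) *m B) a b|].
Proof.
case: n C A B => [|n] C A B hA.
  exists (1 / 2), 0, 0%N; split => [|//|d k a b]; first lra.
  by rewrite (thinmx0 C) !mul0mx mxE normr0 !mul0r.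
pose M := map_mx (real_complex R) A.
have [rs char_M] := closed_field_poly_normal (char_poly M).
rewrite (monicP (char_poly_monic M)) scale1r in char_M.
have rs_lt1 : all (fun z => `|z| < 1) rs.
  apply/allP => z zin; apply: hA.
  by rewrite eigenvalue_root_char char_M root_prod_XsubC.
have [r r01 rs_lt_r] := complex_roots_rate rs rs_lt1.
have := @diff_shifts_eq0_decay _ r%:C (rev rs).
rewrite all_rev => /(_ rs_lt_r) [c c0 decay].
have charM_root_prod : \prod_(x <- rs) (M - x%:M) = 0.
  rewrite -(Cayley_Hamilton M) char_M rmorph_prod; apply: eq_bigr => z _.
  by rewrite rmorphB /= horner_mx_X horner_mx_C.
have c_real : c = (complex.Re c)%:C.
  by move: (ger0_Im c0); case: (c) => x y /= ->.
exists r, (complex.Re c), (size rs); split => //; first by rewrite -lecR -c_real.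
move=> d k a b.
pose u k := ((C *m A ^+ (d + k) *m B) a b)%:C.
have u_mx : u = fun k => (map_mx (real_complex R) C *m M ^+ k *m
                          (M ^+ d *m map_mx (real_complex R) B)) a b.
  apply/funext => j; rewrite /u /M -!rmorphXn -!map_mxM [RHS]mxE.
  by rewrite addnC exprD -mulmxE !mulmxA.
have u_diff_shifts : diff_shifts (rev rs) u =1 (fun=> 0).
  by move=> j; rewrite u_mx diff_shifts_mx revK charM_root_prod mul0mx mulmx0 mxE.
have := decay u u_diff_shifts k; rewrite size_rev /u normc_real c_real.
under eq_bigr do rewrite normc_real.
by rewrite -rmorph_sum -rmorphXn -!rmorphM lecR.
Qed.

Lemma ler_term_sum {R : numDomainType} {I : finType} (F : I -> R) i0 :
  (forall i, 0 <= F i) -> F i0 <= \sum_i F i.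
Proof. by move=> F0; rewrite (bigD1 i0) //= lerDl sumr_ge0. Qed.

Lemma sqrt_sum_sqr_le_sum_norm {R : rcfType} {I : finType} (z : I -> R) :
  Num.sqrt (\sum_i z i ^+ 2) <= \sum_i `|z i|.
Proof.
have S0 : 0 <= \sum_i `|z i| by rewrite sumr_ge0.
rewrite -[X in _ <= X](ger0_norm S0) -sqrtr_sqr; apply: ler_wsqrtr.
rewrite expr2 mulr_suml; apply: ler_sum => i _.
rewrite -real_normK ?num_real // expr2; apply: ler_wpM2l => //.
exact: (ler_term_sum (fun i => `|z i|)).
Qed.

Lemma sum_pair_fst {R : nmodType} {I J : finType} (F : I -> R) :
  \sum_(r : I * J) F r.1 = (\sum_i F i) *+ #|J|.
Proof.
rewrite -(pair_bigA _ (fun i (_ : J) => F i)) /= -sumrMnl.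
by apply: eq_bigr => i _; rewrite sumr_const.
Qed.

Lemma sum_geometric_le {R : realType} (t : R) N : 0 < t < 1 ->
  \sum_(i < N) t ^+ i <= (1 - t)^-1.
Proof.
case/andP=> t0 t1; have := @geometric_le_lim R N 1 t ler01 t0.
by rewrite seriesEord /= mul1r; under eq_bigr do rewrite mul1r; apply; rewrite gtr0_norm.
Qed.

Section HankelDiffNorm.
Context {R : realType} {p n m : nat}.
Variables (C : 'M[R]_(p, n)) (A : 'M[R]_n) (B : 'M[R]_(n, m)).
Local Notation f := (hankel_diff_norm C A B).
Local Notation h k := (C *m A ^+ k *m B).

Lemma hankel_diff_norm_ge0 d : (0 <= f d)%E.
Proof.
apply: (@le_trans _ _ (trunc_val C A B d (fun _ : 'I_0 * 'I_m => 0))%:E).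
  by rewrite lee_fin sqrtr_ge0.
apply: ereal_sup_ubound; exists (existT _ 0%N (fun _ : 'I_0 * 'I_m => 0)) => //=.
by rewrite big1 // => c _; rewrite expr0n.
Qed.

Lemma hankel_entry_le_diff_norm d i j a b :
  (d <= i)%N -> (`|h (i + j) a b|%:E <= f d)%E.
Proof.
move=> di; pose N := (maxn i j).+1.
have iN : (i < N)%N by rewrite ltnS leq_maxl.
have jN : (j < N)%N by rewrite ltnS leq_maxr.
pose c0 : 'I_N * 'I_m := (Ordinal jN, b).
pose x (c : 'I_N * 'I_m) : R := (c == c0)%:R.
apply: (@le_trans _ _ (trunc_val C A B d x)%:E); last first.
  apply: ereal_sup_ubound; exists (existT _ N x) => //=.
  rewrite (bigD1 c0) //= big1 ?addr0 /x ?eqxx ?expr1n // => c /negbTE ->.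
  by rewrite expr0n.
have select_col (r : 'I_N * 'I_p) :
    \sum_(c : 'I_N * 'I_m) hankel_diff C A B d r.1 c.1 r.2 c.2 * x c =
    hankel_diff C A B d r.1 j r.2 b.
  rewrite (bigD1 c0) //= big1 ?addr0 /x ?eqxx ?mulr1 // => c /negbTE ->.
  by rewrite mulr0.
rewrite lee_fin /trunc_val; under eq_bigr do rewrite select_col.
rewrite -sqrtr_sqr; apply: ler_wsqrtr.
apply: le_trans (ler_term_sum _ (Ordinal iN, a) (fun r => sqr_ge0 _)).
rewrite /= /hankel_diff /hankel_inf ifN ?sub0r ?sqrrN //.
by rewrite negb_and -leqNgt di.
Qed.

Lemma hankel_diff_norm_le d (G t : R) : 0 <= G -> 0 < t < 1 ->
  (forall i j a b, ~~ ((i < d) && (j < d))%N -> `|h (i + j) a b| <= G * t ^+ (i + j)) ->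
  (f d <= (p%:R * m%:R * G / (1 - t) ^+ 2)%:E)%E.
Proof.
move=> G0 t01 entry_le; have /andP[t0 t1] := t01.
apply: ge_ereal_sup => _ [[N x] /= x_le1 <-]; rewrite lee_fin /trunc_val.
apply: le_trans (sqrt_sum_sqr_le_sum_norm _) _.
have x_bound c : `|x c| <= 1.
  have := le_trans (ler_term_sum _ c (fun _ => sqr_ge0 _)) x_le1.
  by rewrite -real_normK ?num_real // (@expr_le1 _ 2).
have entry_bound (r : 'I_N * 'I_p) (c : 'I_N * 'I_m) :
    `|hankel_diff C A B d r.1 c.1 r.2 c.2| <= G * (t ^+ r.1 * t ^+ c.1).
  case: r c => [i a] [j b]; rewrite /hankel_diff /hankel_inf /=; case: ifP => H.
    by rewrite subrr normr0 !mulr_ge0 ?exprn_ge0 ?(ltW t0).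
  by rewrite sub0r normrN -exprD entry_le ?H.
apply: le_trans
  (_ : \sum_(r : 'I_N * 'I_p) \sum_(c : 'I_N * 'I_m) G * (t ^+ r.1 * t ^+ c.1) <= _).
  apply: ler_sum => r _; apply: le_trans (ler_norm_sum _ _ _) _.
  apply: ler_sum => c _; rewrite normrM.
  by apply: le_trans (entry_bound r c); rewrite ler_piMr.
have -> : \sum_(r : 'I_N * 'I_p) \sum_(c : 'I_N * 'I_m) G * (t ^+ r.1 * t ^+ c.1) =
          G * ((\sum_(r : 'I_N * 'I_p) t ^+ r.1) * \sum_(c : 'I_N * 'I_m) t ^+ c.1).
  rewrite mulr_suml mulr_sumr; apply: eq_bigr => r _.
  by rewrite !mulr_sumr; apply: eq_bigr => c _; rewrite mulrA.
rewrite !(sum_pair_fst (fun i : 'I_N => t ^+ i)) !card_ord.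
have S0 : 0 <= \sum_(i < N) t ^+ i by rewrite sumr_ge0 // => i _; rewrite exprn_ge0 ?(ltW t0).
rewrite [X in _ <= X](_ : _ = G * (((1 - t)^-1 *+ p) * ((1 - t)^-1 *+ m))); last first.
  by rewrite -[_ *+ p]mulr_natl -[_ *+ m]mulr_natl expr2 invfM; ring.
have geo := sum_geometric_le _ N t01.
apply: ler_wpM2l => //.
by apply: ler_pM; rewrite ?mulrn_wge0 // lerMn2r geo orbT.
Qed.

End HankelDiffNorm.

Section Threshold.
Variables (R : realType) (p : nat) (c delta : R).
Hypotheses (c_gt0 : 0 < c) (delta_gt0 : 0 < delta).

Definition dstar_threshold (d : nat) (T : R) : R :=
  c * Num.sqrt d%:R * Num.sqrt ((p%:R * d%:R + ln (T / delta)) / T).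

Lemma dstar_threshold_ge0 d T : 0 <= dstar_threshold d T.
Proof. by rewrite !mulr_ge0 ?sqrtr_ge0 ?(ltW c_gt0). Qed.

Lemma dstar_threshold_rescale d T k : 0 < T -> 1 <= k ->
  dstar_threshold d (T / k ^+ 2) <= k * dstar_threshold (2 * d)%N T.
Proof.
move=> T0 k1; have k0 : 0 < k by lra.
have k2 : 0 < k ^+ 2 by rewrite exprn_gt0.
have d_le : d%:R <= (2 * d)%:R :> R by rewrite ler_nat leq_pmull.
have ln_le : ln (T / k ^+ 2 / delta) <= ln (T / delta).
  rewrite ler_ln ?posrE ?divr_gt0 // ler_pM2r ?invr_gt0 //.
  by rewrite ler_pdivrMr // ler_peMr ?(ltW T0) // expr_ge1 ?(ltW k0).
rewrite /dstar_threshold; set X := p%:R * d%:R + ln (T / k ^+ 2 / delta).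
have -> : X / (T / k ^+ 2) = k ^+ 2 * (X / T) by field; rewrite !gt_eqF.
rewrite sqrtrM ?(ltW k2) // sqrtr_sqr ger0_norm ?(ltW k0) //.
have kc : 0 <= k * c by rewrite mulr_ge0 ?ltW.
suff /(ler_wpM2l kc) : Num.sqrt d%:R * Num.sqrt (X / T) <=
    Num.sqrt (2 * d)%:R * Num.sqrt ((p%:R * (2 * d)%:R + ln (T / delta)) / T) by lra.
apply: ler_pM; rewrite ?sqrtr_ge0 ?ler_wsqrtr //.
by rewrite ler_pM2r ?invr_gt0 // lerD // ler_wpM2l.
Qed.

Lemma log_ratio_eventually_lt (P eta : R) : 0 <= P -> 0 < eta ->
  exists T1, 0 < T1 /\ forall T, T1 <= T -> (P + ln (T / delta)) / T < eta.
Proof.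
move=> P0 eta0; have de0 : 0 < delta * eta by rewrite mulr_gt0.
pose s0 := 1 + (P + 2) / (delta * eta).
have s0_gt : (P + 2) / (delta * eta) < s0 by rewrite ltrDr.
have s0_ge1 : 1 <= s0 by rewrite lerDl divr_ge0 ?(ltW de0) // addr_ge0.
exists (delta * s0 ^+ 2); split => [|T T1_le]; first by rewrite mulr_gt0 ?exprn_gt0 //; lra.
have T0 : 0 < T by apply: lt_le_trans T1_le; rewrite mulr_gt0 ?exprn_gt0 //; lra.
pose s := Num.sqrt (T / delta).
have Td0 : 0 <= T / delta by rewrite divr_ge0 ?ltW.
have T_eq : T = delta * s ^+ 2 by rewrite sqr_sqrtr // mulrC divfK ?gt_eqF.
have s0_le : s0 <= s.
  rewrite -[s0]ger0_norm -?sqrtr_sqr ?ler_wsqrtr //; last by lra.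
  by rewrite ler_pdivlMr // mulrC.
have s_pos : 0 < s by lra.
have ln_le : ln (T / delta) <= 2 * s.
  rewrite -(sqr_sqrtr Td0) lnXn // mulr2n -/s.
  by have := ln_sublinear s_pos; lra.
have Ps : P + 2 < delta * eta * s by rewrite -ltr_pdivrMl // mulrC (lt_le_trans s0_gt).
have : P + 2 * s < eta * T.
  have : (P + 2) * s <= delta * eta * s * s by rewrite ler_wpM2r ?(ltW s_pos) ?ltW.
  rewrite T_eq; nra.
by rewrite ltr_pdivrMr // mulrC; lra.
Qed.

Lemma dstar_threshold_eventually_lt d eps : 0 < eps ->
  exists T1, 0 < T1 /\ forall T, T1 <= T -> dstar_threshold d T < eps.
Proof.
move=> eps0; pose a := c * Num.sqrt d%:R.
have a0 : 0 <= a by rewrite mulr_ge0 ?sqrtr_ge0 ?(ltW c_gt0).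
have a1 : 0 < a + 1 by lra.
have [T1 [T10 ratio_lt]] := @log_ratio_eventually_lt (p%:R * d%:R) ((eps / (a + 1)) ^+ 2)
  (mulr_ge0 (ler0n _ _) (ler0n _ _)) (exprn_gt0 _ (divr_gt0 eps0 a1)).
exists T1; split => // T /ratio_lt small.
have sqrt_lt : Num.sqrt ((p%:R * d%:R + ln (T / delta)) / T) < eps / (a + 1).
  rewrite -[X in _ < X]ger0_norm ?divr_ge0 ?(ltW eps0) ?(ltW a1) // -sqrtr_sqr.
  by rewrite ltr_sqrt ?exprn_gt0 ?divr_gt0.
apply: le_lt_trans (_ : a * (eps / (a + 1)) < eps).
  by rewrite ler_wpM2l // ltW.
by rewrite mulrA ltr_pdivrMr //; lra.
Qed.

End Threshold.

Lemma eventually_expr_le1 {R : realType} {t : R} (K : R) : 0 < t < 1 ->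
  exists N, forall D, (N <= D)%N -> K * t ^+ D <= 1.
Proof.
case/andP=> t0 t1; have t_lt1 : `|t| < 1 by rewrite gtr0_norm.
have e0 : 0 < (`|K| + 1)^-1 by rewrite invr_gt0 ltr_wpDl.
have [N _ small_tail] := cvgr0_norm_lt _ (cvg_expr t_lt1) _ e0.
exists N => D /small_tail /= tD; apply: le_trans (ler_norm _) _.
rewrite normrM -(mulfV (lt0r_neq0 (ltr_wpDl (normr_ge0 K) ltr01))).
by apply: ler_pM; rewrite ?normr_ge0 ?lerDl // ltW.
Qed.

Lemma eventually_le0_of_le_vanishing {R : realType} (x : nat -> \bar R) (g : nat -> R -> R) :
  (forall d eps, 0 < eps -> exists T1, 0 < T1 /\ forall T, T1 <= T -> g d T < eps) ->
  forall N, exists T2, 0 < T2 /\ forall T, T2 <= T -> forall D, (D < N)%N ->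
    (x D <= (g D T)%:E)%E -> (x D <= 0)%E.
Proof.
move=> g_small; elim=> [|N [T2 [T20 IH_rejects]]]; first by exists 1.
have [xN_le0 | xN_gt0] := leP (x N) 0%E.
  exists T2; split => // T T2T D; rewrite ltnS leq_eqVlt => /predU1P[-> //|].
  exact: IH_rejects.
have [eps eps0 eps_le] : exists2 eps : R, 0 < eps & (eps%:E <= x N)%E.
  by move: xN_gt0; case: (x N) => [e e0 | _ |] //; [exists e | exists 1; rewrite ?leey].
have [T1 [T10 g_lt_eps]] := g_small N eps eps0.
exists (Num.max T1 T2); split; first by rewrite lt_max T10.
move=> T; rewrite ge_max => /andP[T1T T2T] D.
rewrite ltnS leq_eqVlt => /predU1P[-> xN_le | DN]; last exact: IH_rejects.
by have := le_trans eps_le xN_le; rewrite lee_fin leNgt g_lt_eps.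
Qed.

Lemma hankel_diff_norm_double_decay {R : realType} {p n m} (C : 'M[R]_(p, n))
    (A : 'M[R]_n) (B : 'M[R]_(n, m)) :
  spectral_radius_lt1 A -> exists rho K, [/\ 0 < rho < 1, 0 <= K &
    forall D F, hankel_diff_norm C A B D = F%:E ->
      (hankel_diff_norm C A B (2 * D)%N <= (K * F * rho ^+ D)%:E)%E].
Proof.
move=> hA.
have [r [c [L [/andP[r0 r1] c0 window_decay]]]] := hankel_window_decay C A B hA.
(* A fourth root of r leaves room for both the factor rho ^+ D = t ^+ (2 * D)
   and the geometric weight t ^+ (i + j): r ^+ k <= t ^+ (2 * D) * t ^+ (D + k)
   when k >= D. *)
pose t := Num.sqrt (Num.sqrt r).
have t4 : t ^+ 4 = r by rewrite (exprM t 2 2) !sqr_sqrtr ?sqrtr_ge0 ?ltW.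
have t0 : 0 < t by rewrite !sqrtr_gt0.
have t1 : t < 1 by rewrite -(@expr_lt1 _ 4) ?t4 // ltW.
exists (t ^+ 2), (p%:R * m%:R * (c * L%:R) / (1 - t) ^+ 2); split.
- by rewrite exprn_gt0 //= expr_lt1 // ltW.
- by rewrite !mulr_ge0 // invr_ge0 exprn_ge0 // subr_ge0 ltW.
move=> D F fD; have F0 : 0 <= F by rewrite -lee_fin -fD hankel_diff_norm_ge0.
pose G := c * L%:R * F * t ^+ (2 * D)%N.
rewrite (_ : _ * F * _ = p%:R * m%:R * G / (1 - t) ^+ 2); last first.
  by rewrite /G -exprM; ring.
apply: hankel_diff_norm_le => [||i j a b].
- by rewrite /G !mulr_ge0 // exprn_ge0 // ltW.
- by rewrite t0 t1.
rewrite negb_and -!leqNgt => ij_ge.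
have {ij_ge} [k -> Dk] : exists2 k, (i + j = D + k)%N & (D <= k)%N.
  by exists (i + j - D)%N; case/orP: ij_ge; lia.
apply: le_trans (window_decay D k a b) _.
have window_le : \sum_(l < L) `|(C *m A ^+ (D + l) *m B) a b| <= L%:R * F.
  apply: le_trans (_ : \sum_(l < L) F <= _); last by rewrite sumr_const card_ord mulr_natl.
  by apply: ler_sum => l _; rewrite -lee_fin -fD hankel_entry_le_diff_norm.
have rk : r ^+ k <= t ^+ (2 * D)%N * t ^+ (D + k).
  by rewrite -t4 -!exprM -exprD ler_wiXn2l ?ltW //; lia.
rewrite [leRHS](_ : _ = c * (t ^+ (2 * D)%N * t ^+ (D + k)) * (L%:R * F)); last first.
  by rewrite /G; ring.
apply: ler_pM => //; last exact: ler_wpM2l.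
  by rewrite mulr_ge0 // exprn_ge0 // ltW.
by rewrite sumr_ge0.
Qed.

Lemma ereal_inf_nat_double {R : realType} (S S' : set nat) :
  (forall d, S' d -> S (2 * d)%N) ->
  (ereal_inf [set d%:R%:E | d in S] <= 2%:E * ereal_inf [set d%:R%:E | d in S'] :> \bar R)%E.
Proof.
move=> SS'; have [[d0 S'd0] | S'0] := pselect (exists d, S' d); last first.
  rewrite (_ : [set _ | d in S'] = set0) ?ereal_inf0 ?gt0_muley ?leey //.
  by apply/seteqP; split => // y [d S'd _]; apply: S'0; exists d.
have exS' : exists d, `[< S' d >] by exists d0; apply/asboolP.
case: (ex_minnP exS') => D0 /asboolP S'D0 D0_min.
have -> : ereal_inf [set d%:R%:E | d in S'] = D0%:R%:E :> \bar R.
  apply/eqP; rewrite eq_le; apply/andP; split.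
    by apply: ge_ereal_inf; exists D0%:R%:E => //; exists D0.
  by apply/ereal_infP => _ [d S'd <-]; rewrite lee_fin ler_nat D0_min //; apply/asboolP.
apply: ge_ereal_inf; exists (2 * D0)%:R%:E; first by exists (2 * D0)%N => //; apply: SS'.
by rewrite natrM EFinM.
Qed.

Section DstarDoubling.
Context {R : realType} {p n m : nat}.
Variables (C : 'M[R]_(p, n)) (A : 'M[R]_n) (B : 'M[R]_(n, m)).
Variables (kappa delta cC beta Rc : R).
Hypotheses (hA : spectral_radius_lt1 A) (kappa_ge1 : 1 <= kappa) (delta_gt0 : 0 < delta).
Hypothesis c_gt0 : 0 < cC * beta * Rc.
Local Notation f := (hankel_diff_norm C A B).
Local Notation g := (@dstar_threshold R p (cC * beta * Rc) delta).

Lemma dstar_set_double : exists T0, 0 < T0 /\ forall T, T0 <= T -> forall D,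
  dstar_set C A B cC beta Rc (T / kappa ^+ 2) delta D ->
  dstar_set C A B cC beta Rc T delta (2 * D)%N.
Proof.
have [rho [K [rho01 K0 decay]]] := hankel_diff_norm_double_decay C A B hA.
have [D1 rho_small] := eventually_expr_le1 (K * kappa) rho01.
have [T2 [T20 rejects]] := eventually_le0_of_le_vanishing f _
  (@dstar_threshold_eventually_lt _ p _ _ c_gt0 delta_gt0) D1.
have k2 : 0 < kappa ^+ 2 by rewrite exprn_gt0 // (lt_le_trans ltr01).
exists (kappa ^+ 2 * T2); split => [|T T0_le D [D_ge1 fD_le]]; first exact: mulr_gt0.
have T_pos : 0 < T by apply: lt_le_trans T0_le; exact: mulr_gt0.
have T2_le : T2 <= T / kappa ^+ 2 by rewrite ler_pdivlMr // mulrC.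
split; first by rewrite muln_gt0.
have [F fD] : exists F, f D = F%:E.
  move: fD_le (hankel_diff_norm_ge0 C A B D); case: (f D) => [F | |] //.
  by exists F.
apply: le_trans (decay D F fD) _.
rewrite lee_fin; change (K * F * rho ^+ D <= g (2 * D)%N T).
have g2D := @dstar_threshold_ge0 _ p _ delta c_gt0 (2 * D)%N T.
have Krho : 0 <= K * rho ^+ D by rewrite mulr_ge0 // exprn_ge0 // ltW; case/andP: rho01.
have [D_lt | D1_le] := ltnP D D1.
  have F_le0 : F <= 0 by rewrite -lee_fin -fD; exact: rejects T2_le D D_lt fD_le.
  have := ler_wpM2l Krho F_le0; lra.
have F_le : F <= kappa * g (2 * D)%N T.
  rewrite -lee_fin -fD; apply: le_trans fD_le _; rewrite lee_fin.
  exact: dstar_threshold_rescale.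
have := ler_wpM2l Krho F_le; have := ler_wpM2r g2D (rho_small D D1_le); lra.
Qed.

End DstarDoubling.

Theorem proposition17 (R : realType) (p n m : nat)
    (C : 'M[R]_(p, n)) (A : 'M[R]_n) (B : 'M[R]_(n, m))
    (hA : spectral_radius_lt1 A)
    (kappa delta cC beta Rc : R)
    (hkappa : 20 <= kappa) (hdelta : 0 < delta)
    (hcC : 0 < cC) (hbeta : 0 < beta) (hRc : 0 < Rc) :
  exists T0 : R, 0 < T0 /\
    forall t : R, T0 <= t ->
      (dstar C A B cC beta Rc t delta
         <= (kappa / 8)%:E * dstar C A B cC beta Rc (t / kappa ^+ 2) delta)%E.
Proof.
have kappa_ge1 : 1 <= kappa by lra.
have c_gt0 : 0 < cC * beta * Rc by rewrite !mulr_gt0.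
have [T0 [T0_gt0 doubling]] :=
  dstar_set_double C A B kappa delta cC beta Rc hA kappa_ge1 hdelta c_gt0.
exists T0; split => // t t_ge.
apply: le_trans (ereal_inf_nat_double _ _ (doubling t t_ge)) _.
apply: lee_wpmul2r; last by rewrite lee_fin; lra.
by apply/ereal_infP => _ [d _ <-]; rewrite lee_fin.
Qed.
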